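(* Let $(x_n)$ be a level-block sequence in $JT$ which is equivalent to the unit vector basis of $\ell_2$. Then the closed linear span $[x_n]$ is complemented in $JT$.
   Context: Let $\mathcal T$ be the dyadic tree, with nodes enumerated by $\mathbb N$ so that the tree order $\preceq$ satisfies $n\preceq m\Rightarrow n\le m$; $|t|$ is the height of node $t$. A segment is a subset $s\subseteq\mathcal T$ totally ordered by $\preceq$ and convex. For $x\in c_0(\mathcal T)$, $\|x\|_{JT}=\sup\big(\sum_{j=1}^k(\sum_{t\in s_j}x(t))^2\big)^{1/2}$ over all finite families of pairwise disjoint finite segments; $JT=\{x\in c_0:\|x\|_{JT}<\infty\}$. For $0\ne x\in JT$, $\operatorname{supp}x=\{t:x(t)\ne0\}$, $l(x)=\min\{|t|:t\in\operatorname{supp}x\}$, $u(x)=\sup\{|t|:t\in\operatorname{supp}x\}$. A sequence $(x_k)$ of nonzero vectors is level-block if $u(x_k)<l(x_{k+1})$ for all $k$. *)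

From Stdlib Require Import Reals List Arith.
From Coquelicot Require Import Coquelicot.
Open Scope R_scope.

(* ---------- The dyadic tree, nodes enumerated by nat ----------
   Root 0; the children of node n are 2n+1 and 2n+2.
   Hence the parent of m >= 1 is (m-1)/2, and n ⪯ m implies n <= m. *)
Definition parent (m : nat) : nat := Nat.div (m - 1) 2.

Definition tree_le (n m : nat) : Prop := exists k : nat, Nat.iter k parent m = n.

(* height |t| : nodes of height k are 2^k-1, ..., 2^(k+1)-2 *)
Definition height (t : nat) : nat := Nat.log2 (S t).

Definition finite_segment (s : list nat) : Prop :=
  NoDup s /\
  (forall a b, In a s -> In b s -> tree_le a b \/ tree_le b a) /\
  (forall a b c, In a s -> In c s -> tree_le a b -> tree_le b c -> In b s).

Definition admissible_family (F : list (list nat)) : Prop :=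
  (forall s, In s F -> finite_segment s) /\
  ForallOrdPairs (fun s1 s2 => forall t, In t s1 -> ~ In t s2) F.

Definition seg_sum (x : nat -> R) (s : list nat) : R :=
  fold_right (fun t acc => x t + acc) 0 s.

Definition fam_val (x : nat -> R) (F : list (list nat)) : R :=
  fold_right (fun s acc => (seg_sum x s) ^ 2 + acc) 0 F.

Definition jt_sq_norm (x : nat -> R) : Rbar :=
  Lub_Rbar (fun r => exists F, admissible_family F /\ r = fam_val x F).

Definition jt_norm (x : nat -> R) : R := sqrt (real (jt_sq_norm x)).

Definition in_c0 (x : nat -> R) : Prop := is_lim_seq x 0.

Definition in_JT (x : nat -> R) : Prop := in_c0 x /\ is_finite (jt_sq_norm x).

Definition nonzero (x : nat -> R) : Prop := exists t, x t <> 0.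

Definition level_before (x y : nat -> R) : Prop :=
  exists h : nat,
    (forall t, x t <> 0 -> (height t <= h)%nat) /\
    (forall t, y t <> 0 -> (h < height t)%nat).

Definition level_block (xs : nat -> nat -> R) : Prop :=
  (forall k, nonzero (xs k)) /\ (forall k, level_before (xs k) (xs (S k))).

Fixpoint lcomb (a : nat -> R) (xs : nat -> nat -> R) (n : nat) (t : nat) : R :=
  match n with
  | O => 0
  | S n' => lcomb a xs n' t + a n' * xs n' t
  end.

Fixpoint sumsq (a : nat -> R) (n : nat) : R :=
  match n with
  | O => 0
  | S n' => sumsq a n' + a n' ^ 2
  end.

Definition equiv_l2_basis (xs : nat -> nat -> R) : Prop :=
  exists c C : R, 0 < c /\ 0 < C /\
    forall (n : nat) (a : nat -> R),
      c * sqrt (sumsq a n) <= jt_norm (lcomb a xs n) /\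
      jt_norm (lcomb a xs n) <= C * sqrt (sumsq a n).

Definition in_closed_span (xs : nat -> nat -> R) (y : nat -> R) : Prop :=
  in_JT y /\
  forall eps : R, 0 < eps ->
    exists (n : nat) (a : nat -> R),
      jt_norm (fun t => y t - lcomb a xs n t) < eps.

Definition complemented_in_JT (Y : (nat -> R) -> Prop) : Prop :=
  exists (P : (nat -> R) -> (nat -> R)) (K : R),
    (forall x, in_JT x -> in_JT (P x)) /\
    (forall x y a b, in_JT x -> in_JT y ->
       forall t, P (fun s => a * x s + b * y s) t = a * P x t + b * P y t) /\
    (forall x, in_JT x -> jt_norm (P x) <= K * jt_norm x) /\
    (forall x, in_JT x -> Y (P x)) /\
    (forall y, Y y -> forall t, P y t = y t).

From Stdlib Require Import Reals.
From Coquelicot Require Import Coquelicot.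
From Stdlib Require Import Lra Lia List Arith Classical FunctionalExtensionality ClassicalEpsilon.
Open Scope R_scope.

(* For each n choose an admissible family G_n of segments inside the height band
   of x_n on which x_n carries more than c^2/2, where c <= |x_n|.  With the
   semi-inner product <u, v>_G = sum_{s in G} (sum_s u) (sum_s v), let
   f_n y = <x_n, y>_{G_n} / <x_n, x_n>_{G_n}.  Then f_n x_m = delta_nm, and by
   Cauchy-Schwarz f_n(y)^2 <= (2/c^2) <y, y>_{G_n}.  The bands are pairwise
   disjoint, so the union of the G_n is admissible and sum_n f_n(y)^2 <=
   (2/c^2) |y|^2.  The upper l_2 estimate then makes P y = sum_n f_n(y) x_n a
   bounded projection onto [x_n]; at each node t the sum is finite, because
   x_n vanishes on nodes of height < n. *)

Lemma seg_sum_ext u v s : (forall t, In t s -> u t = v t) -> seg_sum u s = seg_sum v s.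
Proof.
  induction s as [|a s IH]; intros H; simpl; auto.
  rewrite H by (simpl; auto). rewrite IH; auto. intros t Ht; apply H; simpl; auto.
Qed.

Lemma seg_sum_eq0 u s : (forall t, In t s -> u t = 0) -> seg_sum u s = 0.
Proof. induction s; simpl; intros H; auto. rewrite H, IHs; auto; lra. Qed.

Lemma seg_sum_lin a b u v s :
  seg_sum (fun t => a * u t + b * v t) s = a * seg_sum u s + b * seg_sum v s.
Proof. induction s; simpl; [lra|]. rewrite IHs; lra. Qed.

Lemma fam_val_ext u v F :
  (forall s t, In s F -> In t s -> u t = v t) -> fam_val u F = fam_val v F.
Proof.
  induction F as [|a F IH]; intros H; simpl; auto.
  rewrite (seg_sum_ext u v a) by (intros; eapply H; simpl; eauto).
  rewrite IH; auto. intros s t Hs Ht; eapply H; simpl; eauto.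
Qed.

Lemma fam_val_app u F1 F2 : fam_val u (F1 ++ F2) = fam_val u F1 + fam_val u F2.
Proof. induction F1; simpl; [lra|]. rewrite IHF1; lra. Qed.

Lemma fam_val_nonneg u F : 0 <= fam_val u F.
Proof. induction F; simpl; [lra|]. nra. Qed.

Lemma admissible_nil : admissible_family nil.
Proof. split; [intros s []|constructor]. Qed.

Lemma jt_sq_norm_ge0 u : Rbar_le 0 (jt_sq_norm u).
Proof.
  apply (proj1 (Lub_Rbar_correct _)). exists nil. split; [apply admissible_nil|reflexivity].
Qed.

Lemma jt_sq_norm_bounded u M :
  (forall F, admissible_family F -> fam_val u F <= M) ->
  is_finite (jt_sq_norm u) /\ real (jt_sq_norm u) <= M.
Proof.
  intros H. pose proof (jt_sq_norm_ge0 u) as H0.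
  assert (H1 : Rbar_le (jt_sq_norm u) M).
  { apply (proj2 (Lub_Rbar_correct _)). intros r [F [HF ->]]. apply H; auto. }
  destruct (jt_sq_norm u); simpl in *; try contradiction. split; [reflexivity|auto].
Qed.

Lemma fam_val_le_jt u F :
  is_finite (jt_sq_norm u) -> admissible_family F -> fam_val u F <= real (jt_sq_norm u).
Proof.
  intros Hf HF.
  assert (H : Rbar_le (fam_val u F) (jt_sq_norm u)) by (apply (proj1 (Lub_Rbar_correct _)); eauto).
  rewrite <- Hf in H. exact H.
Qed.

Lemma jt_sq_norm_real_nonneg u : 0 <= real (jt_sq_norm u).
Proof. pose proof (jt_sq_norm_ge0 u). destruct (jt_sq_norm u); simpl in *; lra. Qed.

Lemma jt_norm_sq u : jt_norm u ^ 2 = real (jt_sq_norm u).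
Proof. apply pow2_sqrt, jt_sq_norm_real_nonneg. Qed.

Lemma jt_norm_lt u eps : 0 < eps -> real (jt_sq_norm u) < eps ^ 2 -> jt_norm u < eps.
Proof.
  intros He H. rewrite <- (sqrt_pow2 eps) by lra.
  apply sqrt_lt_1_alt. split; [apply jt_sq_norm_real_nonneg|exact H].
Qed.

Lemma tree_le_le a b : tree_le a b -> (a <= b)%nat.
Proof.
  intros [k <-]. induction k as [|k IH]; simpl; [lia|].
  unfold parent at 1. assert (Nat.div (Nat.iter k parent b - 1) 2 <= Nat.iter k parent b - 1)%nat
    by (apply Nat.Div0.div_le_upper_bound; lia).
  lia.
Qed.

Lemma tree_le_height a b : tree_le a b -> (height a <= height b)%nat.
Proof. intros H. apply tree_le_le in H. apply Nat.log2_le_mono. lia. Qed.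

Definition singletons (l : list nat) : list (list nat) := map (fun t => t :: nil) l.

Lemma ForallOrdPairs_map {A B} (R1 : A -> A -> Prop) (R2 : B -> B -> Prop) (f : A -> B) l :
  (forall a b, In a l -> In b l -> R1 a b -> R2 (f a) (f b)) ->
  ForallOrdPairs R1 l -> ForallOrdPairs R2 (map f l).
Proof.
  intros H Hl. induction Hl as [|a l Ha Hl IH]; simpl; constructor.
  - rewrite Forall_forall in *. intros y Hy. apply in_map_iff in Hy as [b [<- Hb]].
    apply H; simpl; auto.
  - apply IH. intros; apply H; simpl; auto.
Qed.

Lemma ForallOrdPairs_app {A} (R : A -> A -> Prop) l1 l2 :
  ForallOrdPairs R l1 -> ForallOrdPairs R l2 ->
  (forall a b, In a l1 -> In b l2 -> R a b) -> ForallOrdPairs R (l1 ++ l2).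
Proof.
  intros H1 H2 H. induction H1 as [|a l Ha Hl IH]; simpl; auto. constructor.
  - apply Forall_app; split; auto. rewrite Forall_forall. intros; apply H; simpl; auto.
  - apply IH. intros; apply H; simpl; auto.
Qed.

Lemma admissible_singletons l : NoDup l -> admissible_family (singletons l).
Proof.
  intros Hl. split.
  - intros s Hs. apply in_map_iff in Hs as [t [<- _]].
    split; [constructor; [intros []|constructor]|split].
    + intros a b [<-|[]] [<-|[]]. left. exists 0%nat. reflexivity.
    + intros a b c [<-|[]] [<-|[]] H1 H2. apply tree_le_le in H1, H2.
      left. f_equal. lia.
  - apply NoDup_iff_ForallOrdPairs in Hl. eapply ForallOrdPairs_map; [|exact Hl].
    intros a b _ _ Hab t [<-|[]] [->|[]]. contradiction.
Qed.

Lemma abs_le_jt_norm u t : is_finite (jt_sq_norm u) -> Rabs (u t) <= jt_norm u.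
Proof.
  intros Hf.
  pose proof (fam_val_le_jt u (singletons (t :: nil)) Hf
                (admissible_singletons _ (NoDup_cons _ (in_nil (a := t)) (NoDup_nil _)))) as H.
  simpl in H. unfold jt_norm. rewrite <- sqrt_Rsqr_abs. apply sqrt_le_1_alt. unfold Rsqr. lra.
Qed.

(* The partial sums of [u t ^ 2] over [t < N] are values on admissible families of
   singletons, so the series converges and its terms tend to [0]. *)
Lemma in_c0_of_jt_finite u : is_finite (jt_sq_norm u) -> in_c0 u.
Proof.
  intros Hf.
  set (psum := fun N => fam_val u (singletons (seq 0 N))).
  assert (Hstep : forall N, psum (S N) = psum N + u N ^ 2).
  { intros N. unfold psum, singletons. rewrite seq_S, map_app, fam_val_app. simpl. ring. }
  destruct (ex_finite_lim_seq_incr psum (real (jt_sq_norm u))) as [l Hl].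
  { intros N. rewrite Hstep. pose proof (pow2_ge_0 (u N)). lra. }
  { intros N. apply fam_val_le_jt; auto. apply admissible_singletons, seq_NoDup. }
  assert (Hsq : is_lim_seq (fun N => u N ^ 2) 0).
  { apply is_lim_seq_ext with (fun N => psum (S N) - psum N).
    { intros N. rewrite Hstep. ring. }
    replace 0 with (l - l) by ring.
    apply is_lim_seq_minus'; [apply (is_lim_seq_incr_1 psum)|]; exact Hl. }
  apply is_lim_seq_abs_0.
  apply is_lim_seq_ext with (fun N => sqrt (u N ^ 2)).
  { intros N. rewrite <- sqrt_Rsqr_abs. f_equal. unfold Rsqr. ring. }
  rewrite <- sqrt_0. apply is_lim_seq_continuous; auto.
  apply continuity_pt_sqrt, Rle_refl.
Qed.

Lemma jt_finite_lin u v a b : is_finite (jt_sq_norm u) -> is_finite (jt_sq_norm v) ->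
  is_finite (jt_sq_norm (fun t => a * u t + b * v t)).
Proof.
  intros Hu Hv.
  apply (jt_sq_norm_bounded _ (2 * a^2 * real (jt_sq_norm u) + 2 * b^2 * real (jt_sq_norm v))).
  intros F HF. pose proof (fam_val_le_jt u F Hu HF). pose proof (fam_val_le_jt v F Hv HF).
  assert (fam_val (fun t => a * u t + b * v t) F <= 2 * a^2 * fam_val u F + 2 * b^2 * fam_val v F).
  { clear. induction F; simpl; [lra|]. rewrite seg_sum_lin.
    set (p := seg_sum u a0). set (q := seg_sum v a0).
    assert (0 <= (a*p - b*q)^2) by apply pow2_ge_0. nra. }
  assert (0 <= a^2) by nra. assert (0 <= b^2) by nra. nra.
Qed.

Lemma jt_finite_zero : is_finite (jt_sq_norm (fun _ => 0)).
Proof.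
  apply (jt_sq_norm_bounded _ 0). intros F _. induction F; simpl; [lra|].
  rewrite seg_sum_eq0 by auto. lra.
Qed.

Definition in_levels (lo hi t : nat) : bool := (lo <=? height t) && (height t <=? hi).

Lemma in_levels_true lo hi t : in_levels lo hi t = true <-> (lo <= height t <= hi)%nat.
Proof.
  unfold in_levels. rewrite Bool.andb_true_iff, !Nat.leb_le. tauto.
Qed.

(* Height is monotone along [tree_le], so cutting a segment to a band of levels
   keeps it convex. *)
Lemma finite_segment_filter_levels lo hi s :
  finite_segment s -> finite_segment (filter (in_levels lo hi) s).
Proof.
  intros [Hnd [Hch Hcv]]. split; [|split].
  - apply NoDup_filter; auto.
  - intros a b Ha Hb. apply filter_In in Ha, Hb. apply Hch; tauto.
  - intros a b c Ha Hc H1 H2.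
    apply filter_In in Ha as [Ha Pa]. apply filter_In in Hc as [Hc Pc].
    apply filter_In. split; [exact (Hcv a b c Ha Hc H1 H2)|].
    apply in_levels_true in Pa, Pc. apply in_levels_true.
    apply tree_le_height in H1, H2. lia.
Qed.

Lemma admissible_filter_levels lo hi F :
  admissible_family F -> admissible_family (map (filter (in_levels lo hi)) F).
Proof.
  intros [H1 H2]. split.
  - intros s Hs. apply in_map_iff in Hs as [s0 [<- Hs0]].
    apply finite_segment_filter_levels; auto.
  - eapply ForallOrdPairs_map; [|exact H2]. intros a b _ _ H t Ht Ht'.
    apply filter_In in Ht as [Ht _]. apply filter_In in Ht' as [Ht' _]. exact (H t Ht Ht').
Qed.

Lemma fam_val_filter (p : nat -> bool) u F :
  (forall t, p t = false -> u t = 0) -> fam_val u (map (filter p) F) = fam_val u F.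
Proof.
  intros H. induction F as [|s F IH]; simpl; auto. rewrite IH.
  replace (seg_sum u (filter p s)) with (seg_sum u s); auto.
  clear IH. induction s as [|a s IHs]; simpl; auto.
  destruct (p a) eqn:E; simpl; rewrite IHs; auto. rewrite (H a E). lra.
Qed.

Lemma family_height_bound (F : list (list nat)) :
  exists M, forall s t, In s F -> In t s -> (height t < M)%nat.
Proof.
  exists (S (list_max (map height (concat F)))). intros s t Hs Ht.
  assert (Hmax : Forall (fun k => (k <= list_max (map height (concat F)))%nat)
                        (map height (concat F))) by (apply list_max_le; lia).
  rewrite Forall_forall in Hmax.
  specialize (Hmax (height t) (in_map _ _ _ (proj2 (in_concat _ _) (ex_intro _ s (conj Hs Ht))))).
  lia.
Qed.

Definition fam_dot (u v : nat -> R) (F : list (list nat)) : R :=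
  fold_right (fun s acc => seg_sum u s * seg_sum v s + acc) 0 F.

Lemma fam_dot_lin_r u v w a b F :
  fam_dot u (fun t => a * v t + b * w t) F = a * fam_dot u v F + b * fam_dot u w F.
Proof. induction F; simpl; [lra|]. rewrite seg_sum_lin, IHF. ring. Qed.

Lemma fam_dot_diag u F : fam_dot u u F = fam_val u F.
Proof. induction F; simpl; auto. rewrite IHF. ring. Qed.

Lemma fam_dot_eq0_r u v F : (forall s t, In s F -> In t s -> v t = 0) -> fam_dot u v F = 0.
Proof.
  induction F; simpl; intros H; auto.
  rewrite (seg_sum_eq0 v a) by (intros; eapply H; simpl; eauto).
  rewrite IHF; [ring|]. intros; eapply H; simpl; eauto.
Qed.

Lemma fam_dot_cauchy_schwarz u v F : fam_dot u v F ^ 2 <= fam_val u F * fam_val v F.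
Proof.
  induction F as [|s F IH]; simpl; [lra|].
  set (A := fam_dot u v F) in *. set (P := fam_val u F) in *. set (Q := fam_val v F) in *.
  set (a := seg_sum u s). set (b := seg_sum v s).
  assert (HP : 0 <= P) by apply fam_val_nonneg. assert (HQ : 0 <= Q) by apply fam_val_nonneg.
  destruct (Rle_lt_or_eq_dec 0 P HP) as [Hp|<-].
  - assert (0 <= (P*b - a*A)^2 + a^2*(P*Q - A^2))
      by (pose proof (pow2_ge_0 (P*b - a*A)); pose proof (pow2_ge_0 a); nra).
    nra.
  - assert (A = 0) by nra. rewrite H. nra.
Qed.

Lemma lcomb_ext a b xs n t : (forall k, a k = b k) -> lcomb a xs n t = lcomb b xs n t.
Proof. intros H. induction n; simpl; auto. rewrite IHn, H; auto. Qed.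

Lemma lcomb_lin p q a b xs n t :
  lcomb (fun k => p * a k + q * b k) xs n t = p * lcomb a xs n t + q * lcomb b xs n t.
Proof. induction n; simpl; [lra|]. rewrite IHn; ring. Qed.

Lemma lcomb_eq0 a xs n t : (forall k, (k < n)%nat -> a k = 0) -> lcomb a xs n t = 0.
Proof.
  intros H. induction n; simpl; auto.
  rewrite IHn, H by (lia || (intros; apply H; lia)). ring.
Qed.

Lemma lcomb_eventually_const a xs t M : (forall k, (M <= k)%nat -> xs k t = 0) ->
  forall M', (M <= M')%nat -> lcomb a xs M' t = lcomb a xs M t.
Proof.
  intros H M' HM. induction HM; auto. simpl. rewrite H by lia. rewrite IHHM. lra.
Qed.

Lemma jt_finite_lcomb a xs n :
  (forall k, is_finite (jt_sq_norm (xs k))) -> is_finite (jt_sq_norm (lcomb a xs n)).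
Proof.
  intros H. induction n.
  - apply jt_finite_zero.
  - replace (lcomb a xs (S n)) with (fun t => 1 * lcomb a xs n t + a n * xs n t)
      by (extensionality t; simpl; ring).
    apply jt_finite_lin; auto.
Qed.

Lemma sumsq_eq0 a n : (forall k, (k < n)%nat -> a k = 0) -> sumsq a n = 0.
Proof.
  intros H. induction n; simpl; auto.
  rewrite IHn, H by (lia || (intros; apply H; lia)). ring.
Qed.

Lemma sumsq_nonneg a n : 0 <= sumsq a n.
Proof. induction n; simpl; [lra|]. pose proof (pow2_ge_0 (a n)). lra. Qed.

Definition take_coef (n : nat) (a : nat -> R) k := if (k <? n)%nat then a k else 0.
Definition drop_coef (n : nat) (a : nat -> R) k := if (k <? n)%nat then 0 else a k.

Lemma lcomb_take_coef a xs n M t : lcomb (take_coef n a) xs M t = lcomb a xs (Nat.min n M) t.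
Proof.
  induction M; simpl.
  - rewrite Nat.min_0_r; reflexivity.
  - unfold take_coef at 2. destruct (Nat.ltb_spec M n).
    + rewrite Nat.min_r by lia. rewrite Nat.min_r in IHM by lia. simpl. lra.
    + rewrite Nat.min_l by lia. rewrite Nat.min_l in IHM by lia. lra.
Qed.

Lemma lcomb_split a xs n M t :
  lcomb a xs M t = lcomb a xs (Nat.min n M) t + lcomb (drop_coef n a) xs M t.
Proof.
  induction M; simpl.
  - rewrite Nat.min_0_r; simpl; lra.
  - unfold drop_coef at 2. destruct (Nat.ltb_spec M n).
    + rewrite Nat.min_r by lia. rewrite Nat.min_r in IHM by lia. simpl. lra.
    + rewrite Nat.min_l by lia. rewrite Nat.min_l in IHM by lia. lra.
Qed.

Lemma sumsq_split a n M : sumsq a M = sumsq a (Nat.min n M) + sumsq (drop_coef n a) M.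
Proof.
  induction M; cbn [sumsq].
  - rewrite Nat.min_0_r; cbn [sumsq]; lra.
  - unfold drop_coef at 2. destruct (Nat.ltb_spec M n).
    + rewrite Nat.min_r by lia. rewrite Nat.min_r in IHM by lia. cbn [sumsq]. nra.
    + rewrite Nat.min_l by lia. rewrite Nat.min_l in IHM by lia. lra.
Qed.

Lemma jt_norm_ge_of_lower_l2 xs c n :
  (forall m a, c * sqrt (sumsq a m) <= jt_norm (lcomb a xs m)) -> c <= jt_norm (xs n).
Proof.
  intros H. set (e := fun k => if (k =? n)%nat then 1 else 0).
  assert (Hbelow : forall k, (k < n)%nat -> e k = 0).
  { intros k Hk. unfold e. destruct (Nat.eqb_spec k n); [lia|reflexivity]. }
  assert (Hs : sumsq e (S n) = 1).
  { simpl. rewrite sumsq_eq0 by auto. unfold e. rewrite Nat.eqb_refl. ring. }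
  assert (Hl : lcomb e xs (S n) = xs n).
  { extensionality t. simpl. rewrite lcomb_eq0 by auto. unfold e. rewrite Nat.eqb_refl. ring. }
  specialize (H (S n) e). rewrite Hs, Hl, sqrt_1 in H. lra.
Qed.

Section LevelBlock.
Variable xs : nat -> nat -> R.
Hypothesis xs_level_block : level_block xs.

Definition band_top (n : nat) : nat :=
  proj1_sig (constructive_indefinite_description _ (proj2 xs_level_block n)).

Definition band_bottom (n : nat) : nat :=
  match n with O => O | S k => S (band_top k) end.

Lemma band_top_spec n :
  (forall t, xs n t <> 0 -> (height t <= band_top n)%nat) /\
  (forall t, xs (S n) t <> 0 -> (band_top n < height t)%nat).
Proof. unfold band_top. destruct (constructive_indefinite_description _ _) as [h Hh]. exact Hh. Qed.

Lemma support_in_band n t : xs n t <> 0 -> (band_bottom n <= height t <= band_top n)%nat.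
Proof.
  intros H. split; [|apply band_top_spec; auto].
  destruct n; simpl; [lia|]. apply (proj2 (band_top_spec n)) in H. lia.
Qed.

Lemma band_bottom_le_top n : (band_bottom n <= band_top n)%nat.
Proof. destruct (proj1 xs_level_block n) as [t Ht]. apply support_in_band in Ht. lia. Qed.

Lemma band_top_mono m n : (m <= n)%nat -> (band_top m <= band_top n)%nat.
Proof.
  induction 1 as [|n _ IH]; auto. pose proof (band_bottom_le_top (S n)). simpl in *. lia.
Qed.

Lemma band_top_lt_bottom m n : (m < n)%nat -> (band_top m < band_bottom n)%nat.
Proof.
  intros H. destruct n as [|n]; [lia|]. simpl. pose proof (band_top_mono m n). lia.
Qed.

Lemma le_band_bottom n : (n <= band_bottom n)%nat.
Proof. induction n; simpl; [lia|]. pose proof (band_bottom_le_top n). lia. Qed.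

Lemma xs_eq0_below_level k t : (height t < k)%nat -> xs k t = 0.
Proof.
  intros H. destruct (Req_dec (xs k t) 0) as [|Hne]; auto.
  apply support_in_band in Hne. pose proof (le_band_bottom k). lia.
Qed.

Lemma xs_eq0_off_band n k t :
  (band_bottom n <= height t <= band_top n)%nat -> k <> n -> xs k t = 0.
Proof.
  intros Hb Hkn. destruct (Req_dec (xs k t) 0) as [|Hne]; auto. exfalso.
  apply support_in_band in Hne.
  destruct (Nat.lt_trichotomy k n) as [H|[H|H]]; [| contradiction |];
    apply band_top_lt_bottom in H; lia.
Qed.

Lemma lcomb_xs_stable a t M :
  (S (height t) <= M)%nat -> lcomb a xs M t = lcomb a xs (S (height t)) t.
Proof. intros H. apply lcomb_eventually_const; auto. intros k Hk. apply xs_eq0_below_level. lia. Qed.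

Section Projection.
Hypothesis xs_jt_finite : forall k, is_finite (jt_sq_norm (xs k)).
Variables c C : R.
Hypothesis c_pos : 0 < c.
Hypothesis xs_norm_ge : forall n, c <= jt_norm (xs n).
Hypothesis upper_l2 : forall n a, jt_norm (lcomb a xs n) <= C * sqrt (sumsq a n).

Lemma norming_family_exists n : exists G, admissible_family G /\
  (forall s t, In s G -> In t s -> (band_bottom n <= height t <= band_top n)%nat) /\
  c ^ 2 / 2 < fam_val (xs n) G.
Proof.
  assert (Hc2 : c ^ 2 <= real (jt_sq_norm (xs n))).
  { rewrite <- jt_norm_sq. pose proof (xs_norm_ge n). nra. }
  assert (HF : exists F, admissible_family F /\ c ^ 2 / 2 < fam_val (xs n) F).
  { apply NNPP. intros Hn.
    destruct (jt_sq_norm_bounded (xs n) (c ^ 2 / 2)) as [_ Hb]; [|nra].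
    intros F HF. apply Rnot_lt_le. intros Hl. apply Hn. eauto. }
  destruct HF as [F [HF Hv]].
  exists (map (filter (in_levels (band_bottom n) (band_top n))) F). split; [|split].
  - apply admissible_filter_levels; auto.
  - intros s t Hs Ht. apply in_map_iff in Hs as [s0 [<- _]].
    apply filter_In in Ht as [_ Ht]. apply in_levels_true; auto.
  - rewrite fam_val_filter; auto. intros t Hb.
    destruct (Req_dec (xs n t) 0) as [|Hne]; auto.
    apply support_in_band, in_levels_true in Hne. congruence.
Qed.

Definition norming_family (n : nat) : list (list nat) :=
  proj1_sig (constructive_indefinite_description _ (norming_family_exists n)).

Lemma norming_family_spec n : admissible_family (norming_family n) /\
  (forall s t, In s (norming_family n) -> In t s -> (band_bottom n <= height t <= band_top n)%nat) /\
  c ^ 2 / 2 < fam_val (xs n) (norming_family n).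
Proof. unfold norming_family. destruct (constructive_indefinite_description _ _) as [G HG]. exact HG. Qed.

Definition coef (n : nat) (y : nat -> R) : R :=
  fam_dot (xs n) y (norming_family n) / fam_val (xs n) (norming_family n).

Lemma coef_lin n a b v w : coef n (fun t => a * v t + b * w t) = a * coef n v + b * coef n w.
Proof.
  unfold coef. rewrite fam_dot_lin_r. pose proof (proj2 (proj2 (norming_family_spec n))).
  field. nra.
Qed.

Lemma coef_sq_le n y : coef n y ^ 2 <= (2 / c ^ 2) * fam_val y (norming_family n).
Proof.
  destruct (norming_family_spec n) as [_ [_ Hv]].
  set (A := fam_val (xs n) (norming_family n)) in *.
  set (B := fam_val y (norming_family n)).
  pose proof (fam_dot_cauchy_schwarz (xs n) y (norming_family n)) as Hcs. fold A B in Hcs.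
  assert (Hc2 : 0 < c ^ 2) by nra.
  unfold coef. fold A. unfold Rdiv at 1. rewrite Rpow_mult_distr, pow_inv.
  apply Rle_trans with (B / A).
  - apply (Rmult_le_reg_r (A ^ 2)); [nra|]. field_simplify; nra.
  - assert (HB : 0 <= B) by apply fam_val_nonneg.
    apply (Rmult_le_reg_r (A * c ^ 2)); [nra|]. field_simplify; nra.
Qed.

Lemma coef_xs n j : coef n (xs j) = if (j =? n)%nat then 1 else 0.
Proof.
  unfold coef. destruct (Nat.eqb_spec j n) as [->|Hjn].
  - rewrite fam_dot_diag. pose proof (proj2 (proj2 (norming_family_spec n))). field. nra.
  - rewrite fam_dot_eq0_r; [unfold Rdiv; ring|].
    intros s t Hs Ht. apply (xs_eq0_off_band n); auto.
    apply (proj1 (proj2 (norming_family_spec n)) s); auto.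
Qed.

Lemma coef_lcomb n a m : coef n (lcomb a xs m) = take_coef m a n.
Proof.
  induction m.
  - replace (lcomb a xs 0) with (fun t => 0 * xs 0%nat t + 0 * xs 0%nat t)
      by (extensionality t; simpl; ring).
    rewrite coef_lin. unfold take_coef. simpl. ring.
  - replace (lcomb a xs (S m)) with (fun t => 1 * lcomb a xs m t + a m * xs m t)
      by (extensionality t; simpl; ring).
    rewrite coef_lin, IHm, coef_xs. unfold take_coef.
    destruct (Nat.eqb_spec m n); destruct (Nat.ltb_spec n m); destruct (Nat.ltb_spec n (S m));
      try lia; subst; ring.
Qed.

Fixpoint norming_union (N : nat) : list (list nat) :=
  match N with O => nil | S k => norming_union k ++ norming_family k end.

Lemma norming_union_admissible N : admissible_family (norming_union N) /\
  (forall s t, In s (norming_union N) -> In t s -> (height t < band_bottom N)%nat).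
Proof.
  induction N as [|N [[IH1 IH2] IH3]].
  - split; [apply admissible_nil|]. intros s t [].
  - destruct (norming_family_spec N) as [[HG1 HG2] [HG3 _]].
    pose proof (band_bottom_le_top N). simpl. split; [split|].
    + intros s Hs. apply in_app_or in Hs as [Hs|Hs]; auto.
    + apply ForallOrdPairs_app; auto. intros a b Ha Hb t Ht Ht'.
      apply (IH3 a t Ha) in Ht. apply (HG3 b t Hb) in Ht'. lia.
    + intros s t Hs Ht. apply in_app_or in Hs as [Hs|Hs].
      * apply (IH3 s t Hs) in Ht. lia.
      * apply (HG3 s t Hs) in Ht. lia.
Qed.

Lemma sumsq_coef_le y N : is_finite (jt_sq_norm y) ->
  sumsq (fun k => coef k y) N <= (2 / c ^ 2) * real (jt_sq_norm y).
Proof.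
  intros Hf.
  apply Rle_trans with ((2 / c ^ 2) * fam_val y (norming_union N)).
  - induction N; cbn [sumsq norming_union]; [simpl; lra|].
    rewrite fam_val_app. pose proof (coef_sq_le N y). lra.
  - apply Rmult_le_compat_l.
    + apply Rlt_le, Rdiv_lt_0_compat; [lra|nra].
    + apply fam_val_le_jt; auto. apply norming_union_admissible.
Qed.

Lemma jt_sq_norm_lcomb_le a n : real (jt_sq_norm (lcomb a xs n)) <= C ^ 2 * sumsq a n.
Proof.
  rewrite <- jt_norm_sq, <- (pow2_sqrt (sumsq a n)) by apply sumsq_nonneg.
  replace (C ^ 2 * sqrt (sumsq a n) ^ 2) with ((C * sqrt (sumsq a n)) ^ 2) by ring.
  apply pow_incr. split; [apply sqrt_pos|apply upper_l2].
Qed.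

Definition proj (y : nat -> R) (t : nat) : R :=
  lcomb (fun k => coef k y) xs (S (height t)) t.

Definition proj_sq_bound : R := C ^ 2 * (2 / c ^ 2).

Lemma proj_lin x y a b t : proj (fun s => a * x s + b * y s) t = a * proj x t + b * proj y t.
Proof.
  unfold proj. rewrite (lcomb_ext _ (fun k => a * coef k x + b * coef k y)) by (intros; apply coef_lin).
  apply lcomb_lin.
Qed.

Lemma proj_lcomb a n t : proj (lcomb a xs n) t = lcomb a xs n t.
Proof.
  unfold proj. rewrite <- (lcomb_xs_stable _ t (Nat.max n (S (height t)))) by lia.
  rewrite (lcomb_ext _ (take_coef n a)) by (intros; apply coef_lcomb).
  rewrite lcomb_take_coef, Nat.min_l by lia. reflexivity.
Qed.

Lemma proj_bound y : is_finite (jt_sq_norm y) ->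
  is_finite (jt_sq_norm (proj y)) /\ real (jt_sq_norm (proj y)) <= proj_sq_bound * real (jt_sq_norm y).
Proof.
  intros Hf. apply jt_sq_norm_bounded. intros F HF.
  destruct (family_height_bound F) as [M HM].
  rewrite (fam_val_ext _ (lcomb (fun k => coef k y) xs M)).
  2:{ intros s t Hs Ht. specialize (HM s t Hs Ht). unfold proj. symmetry. apply lcomb_xs_stable. lia. }
  eapply Rle_trans; [apply fam_val_le_jt; auto; apply jt_finite_lcomb, xs_jt_finite|].
  eapply Rle_trans; [apply jt_sq_norm_lcomb_le|]. unfold proj_sq_bound. rewrite Rmult_assoc.
  apply Rmult_le_compat_l; [nra|]. apply sumsq_coef_le; auto.
Qed.

Lemma proj_norm_le y : is_finite (jt_sq_norm y) -> jt_norm (proj y) <= sqrt proj_sq_bound * jt_norm y.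
Proof.
  intros Hf. destruct (proj_bound y Hf) as [_ H]. unfold jt_norm.
  rewrite <- sqrt_mult_alt by (unfold proj_sq_bound; apply Rmult_le_pos; [nra|];
                               apply Rlt_le, Rdiv_lt_0_compat; [lra|nra]).
  apply sqrt_le_1_alt. auto.
Qed.

Lemma proj_in_JT y : in_JT y -> in_JT (proj y).
Proof.
  intros [_ Hf]. destruct (proj_bound y Hf) as [H _]. split; auto. apply in_c0_of_jt_finite; auto.
Qed.

Lemma proj_tail_fam_val y n F : admissible_family F -> exists M, (n <= M)%nat /\
  fam_val (fun t => proj y t - lcomb (fun k => coef k y) xs n t) F
  <= C ^ 2 * (sumsq (fun k => coef k y) M - sumsq (fun k => coef k y) n).
Proof.
  intros HF. destruct (family_height_bound F) as [M HM].
  set (b := fun k => coef k y). exists (Nat.max M n). split; [lia|].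
  rewrite (fam_val_ext _ (lcomb (drop_coef n b) xs (Nat.max M n))).
  2:{ intros s t Hs Ht. specialize (HM s t Hs Ht). unfold proj.
      rewrite <- (lcomb_xs_stable _ t (Nat.max M n)) by lia.
      rewrite (lcomb_split _ _ n (Nat.max M n) t), Nat.min_l by lia. unfold b. ring. }
  eapply Rle_trans; [apply fam_val_le_jt; auto; apply jt_finite_lcomb, xs_jt_finite|].
  eapply Rle_trans; [apply jt_sq_norm_lcomb_le|].
  rewrite (sumsq_split b n (Nat.max M n)), Nat.min_l by lia. right. ring.
Qed.

(* The partial sums of [sum_k coef k y ^ 2] are bounded, so they have a supremum
   [L]; the tails of [proj y] are then controlled by [L - sumsq _ n]. *)
Lemma proj_in_span y : in_JT y -> in_closed_span xs (proj y).
Proof.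
  intros Hy. split; [apply proj_in_JT; auto|]. destruct Hy as [_ Hf].
  set (Sq := sumsq (fun k => coef k y)).
  destruct (completeness (fun r => exists N, r = Sq N)) as [L [HLub HLl]].
  { exists (2 / c ^ 2 * real (jt_sq_norm y)). intros r [N ->]. apply sumsq_coef_le; auto. }
  { exists (Sq 0%nat). exists 0%nat; auto. }
  intros eps Heps.
  assert (Hn : exists n, L - eps ^ 2 / (C ^ 2 + 1) < Sq n).
  { apply NNPP. intros Hn. assert (L <= L - eps ^ 2 / (C ^ 2 + 1)).
    { apply HLl. intros r [N ->]. apply Rnot_lt_le. intros Hl. apply Hn. eauto. }
    assert (0 < eps ^ 2 / (C ^ 2 + 1)) by (apply Rdiv_lt_0_compat; nra). lra. }
  destruct Hn as [n Hn]. exists n, (fun k => coef k y).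
  assert (HSn : Sq n <= L) by (apply HLub; eauto).
  assert (Htail : C ^ 2 * (L - Sq n) < eps ^ 2).
  { set (d := eps ^ 2 / (C ^ 2 + 1)) in Hn.
    assert (Hd : (C ^ 2 + 1) * d = eps ^ 2) by (unfold d; field; nra).
    pose proof (pow2_ge_0 C). nra. }
  apply jt_norm_lt; auto.
  eapply Rle_lt_trans; [|exact Htail].
  apply jt_sq_norm_bounded. intros F HF.
  destruct (proj_tail_fam_val y n F HF) as [M [_ HM]].
  assert (Sq M <= L) by (apply HLub; eauto). unfold Sq in *. nra.
Qed.

Lemma proj_id y : in_closed_span xs y -> forall t, proj y t = y t.
Proof.
  intros [[_ Hy] Happ] t. apply cond_eq. intros eps Heps.
  set (K := sqrt proj_sq_bound + 1).
  assert (HK : 1 <= K) by (unfold K; pose proof (sqrt_pos proj_sq_bound); lra).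
  destruct (Happ (eps / K)) as [n [a Ha]]; [apply Rdiv_lt_0_compat; lra|].
  set (w := fun s => 1 * y s + (-1) * lcomb a xs n s).
  assert (Hwf : is_finite (jt_sq_norm w)) by (apply jt_finite_lin; auto; apply jt_finite_lcomb, xs_jt_finite).
  replace (fun t => y t - lcomb a xs n t) with w in Ha by (extensionality s; unfold w; ring).
  replace (proj y t - y t) with (proj w t - w t)
    by (unfold w; rewrite proj_lin, proj_lcomb; ring).
  pose proof (abs_le_jt_norm (proj w) t (proj1 (proj_bound w Hwf))).
  pose proof (proj_norm_le w Hwf). pose proof (abs_le_jt_norm w t Hwf).
  pose proof (Rabs_triang (proj w t) (- w t)) as Htri. rewrite Rabs_Ropp in Htri.
  replace eps with (K * (eps / K)) by (field; lra).
  unfold K in *. unfold Rminus. nra.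
Qed.

Lemma closed_span_complemented : complemented_in_JT (in_closed_span xs).
Proof.
  exists proj, (sqrt proj_sq_bound). split; [|split; [|split; [|split]]].
  - apply proj_in_JT.
  - intros; apply proj_lin.
  - intros x [_ Hx]. apply proj_norm_le; auto.
  - apply proj_in_span.
  - apply proj_id.
Qed.

End Projection.
End LevelBlock.

Theorem mainTheorem9 (xs : nat -> nat -> R) :
  (forall k, in_JT (xs k)) ->
  level_block xs ->
  equiv_l2_basis xs ->
  complemented_in_JT (in_closed_span xs).
Proof.
  intros Hjt Hlb [c [C [Hc [_ Hequiv]]]].
  apply (closed_span_complemented xs Hlb (fun k => proj2 (Hjt k)) c C Hc).
  - intros n. apply jt_norm_ge_of_lower_l2. intros m a. apply Hequiv.
  - intros n a. apply Hequiv.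
Qed.
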